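(* Let $X$ be a Banach space, $H$ a Hilbert space, $T\in\mathcal L(X,H)$, $f\in H$, $J$ a seminorm on $X$ such that all Tikhonov functionals below have minimizers, and $(\lambda_k)$ an increasing sequence of positive parameters. Fix $k$ and assume that the MHDM iterate $x_k$ coincides with a chosen minimizer $x_{\lambda_k}$ of $x\mapsto\frac{\lambda_k}{2}\|Tx-f\|^2+J(x)$. Let $x_{\lambda_{k+1}}$ be a minimizer of $x\mapsto\frac{\lambda_{k+1}}{2}\|Tx-f\|^2+J(x)$ and $\xi_{\lambda_{k+1}}=\lambda_{k+1}T^*(f-Tx_{\lambda_{k+1}})\in\partial J(x_{\lambda_{k+1}})$. Then $$x_{\lambda_{k+1}}\in\arg\min_{x\in X}\Big\{\frac{\lambda_{k+1}}{2}\|Tx-f\|^2+J(x-x_k)\Big\}$$ if and only if $$D_J^{\xi_{\lambda_{k+1}}}(x_{\lambda_{k+1}}-x_{\lambda_k},x_{\lambda_{k+1}})=J(x_{\lambda_{k+1}}-x_{\lambda_k})-J(x_{\lambda_{k+1}})+\langle\xi_{\lambda_{k+1}},x_{\lambda_k}\rangle=0.$$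
   Context: Seminorm: $J:X\to[0,\infty]$ with $J(\alpha x)=|\alpha|J(x)$, $J(x+y)\le J(x)+J(y)$. Subgradient: $\partial J(x_0)=\{x^*\in X^*:\langle x^*,x-x_0\rangle\le J(x)-J(x_0)\ \forall x\}$; Bregman distance $D_J^{x^*}(x_1,x_0)=J(x_1)-J(x_0)-\langle x^*,x_1-x_0\rangle$ for $x^*\in\partial J(x_0)$. MHDM: $x_0\in\arg\min_x\frac{\lambda_0}{2}\|Tx-f\|^2+J(x)$, and for $k\ge1$, $x_k\in\arg\min_x\frac{\lambda_k}{2}\|Tx-f\|^2+J(x-x_{k-1})$. *)

From HB Require Import structures.
From mathcomp Require Import all_boot all_order all_algebra.
From mathcomp Require Import all_classical all_reals all_analysis.
Set Implicit Arguments. Unset Strict Implicit. Unset Printing Implicit Defensive.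
Import Order.TTheory GRing.Theory Num.Theory.
Import numFieldNormedType.Exports.
Local Open Scope ring_scope.

(* A (real) inner product compatible with the norm of H:
   H : completeNormedModType R together with such an inner product is a
   Hilbert space. *)
Definition is_inner_product (R : realType) (H : normedModType R)
  (ip : H -> H -> R) : Prop :=
  [/\ forall a x y z, ip (a *: x + y) z = a * ip x z + ip y z,
      forall x y, ip x y = ip y x &
      forall x, `|x| ^+ 2 = ip x x].

(* Adjoint T^* : H -> X^*, with H^* identified with H via Riesz:
   <T^* h, x> = (h, T x)_H. *)
Definition adjoint (R : realType) (X H : normedModType R) (ip : H -> H -> R)
  (T : X -> H) (h : H) : X -> R := fun x => ip h (T x).

Definition is_seminorm (R : realType) (X : normedModType R)
  (J : X -> \bar R) : Prop :=
  [/\ forall x, (0 <= J x)%E,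
      forall (a : R) x, J (a *: x) = (`|a|%:E * J x)%E &
      forall x y, (J (x + y)%R <= J x + J y)%E].

Definition is_argmin (T : Type) (R : realType) (F : T -> \bar R) (x : T) : Prop :=
  forall y, (F x <= F y)%E.

Definition tikhonov (R : realType) (X H : normedModType R) (T : X -> H) (f : H)
  (J : X -> \bar R) (lam : R) (x : X) : \bar R :=
  ((lam / 2 * `|T x - f| ^+ 2)%:E + J x)%E.

Definition mhdm_fun (R : realType) (X H : normedModType R) (T : X -> H) (f : H)
  (J : X -> \bar R) (lam : R) (z : X) (x : X) : \bar R :=
  ((lam / 2 * `|T x - f| ^+ 2)%:E + J (x - z)%R)%E.

Definition is_mhdm (R : realType) (X H : normedModType R) (T : X -> H) (f : H)
  (J : X -> \bar R) (lam : nat -> R) (xs : nat -> X) : Prop :=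
  is_argmin (tikhonov T f J (lam 0%N)) (xs 0%N) /\
  forall n, is_argmin (mhdm_fun T f J (lam n.+1) (xs n)) (xs n.+1).

Definition bregman (R : realType) (X : normedModType R) (J : X -> \bar R)
  (xi : X -> R) (x1 x0 : X) : \bar R :=
  (J x1 - J x0 - (xi (x1 - x0)%R)%:E)%E.

From HB Require Import structures.
From mathcomp Require Import all_boot all_order all_algebra.
From mathcomp Require Import all_classical all_reals all_analysis.
From mathcomp Require Import ring lra.
Import Order.TTheory GRing.Theory Num.Theory.
Import numFieldNormedType.Exports.
Local Open Scope ring_scope.
Set Implicit Arguments. Unset Strict Implicit.

(* Write x1 for the Tikhonov minimizer x_{lam_{k+1}}, x0 for
   x_{lam_k} = x_k, and Q y = lam/2 ||T y - f||^2 for the fidelity term.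
   1. In a Hilbert space Q is an exact quadratic around x1:
        Q y = Q x1 - xi (y - x1) + N (y - x1),   N d = lam/2 ||T d||^2 >= 0,
      where xi = lam T^*(f - T x1) is additive and homogeneous.
   2. First-order optimality: if x1 minimizes Q + g with g convex, nonnegative
      and extended-real valued, then xi is a subgradient of g at x1 (compare
      x1 with x1 + t (y - x1) and let t -> 0).
   3. For a seminorm J, xi in dJ(x1) means J x1 = xi x1 and xi <= J.
   4. Applying 2 to g = J(. - x0) (also convex) shows that x1 minimizes the
      MHDM functional iff J(x1 - x0) = xi (x1 - x0), and by 3 this equality is
      exactly the vanishing of the Bregman distance of the theorem. *)

Section InnerProduct.
Variables (R : realType) (H : normedModType R) (ip : H -> H -> R).
Hypothesis hip : is_inner_product ip.

Lemma ip_sym x z : ip x z = ip z x.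
Proof. by case: hip. Qed.

Lemma ip_addl x y z : ip (x + y) z = ip x z + ip y z.
Proof. by case: hip => lin _ _; have := lin 1 x y z; rewrite scale1r mul1r. Qed.

Lemma ip_scalel a x z : ip (a *: x) z = a * ip x z.
Proof.
case: hip => lin _ _.
have ip0 : ip 0 z = 0 by have := lin 1 0 0 z; rewrite scale1r addr0 mul1r; lra.
by have := lin a x 0 z; rewrite addr0 ip0 addr0.
Qed.

Lemma ip_oppl x z : ip (- x) z = - ip x z.
Proof. by rewrite -scaleN1r ip_scalel mulN1r. Qed.

Lemma sqr_norm_add a b : `|a + b| ^+ 2 = `|a| ^+ 2 + 2 * ip a b + `|b| ^+ 2.
Proof.
case: hip => _ _ sq; rewrite !sq !ip_addl (ip_sym b (a + b)) (ip_sym a (a + b)).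
by rewrite !ip_addl (ip_sym b a); ring.
Qed.

End InnerProduct.

Section Adjoint.
Variables (R : realType) (X H : normedModType R) (ip : H -> H -> R).
Hypothesis hip : is_inner_product ip.
Variables (T : {linear X -> H}) (h : H).

Lemma adjointB a b : adjoint ip T h (a - b) = adjoint ip T h a - adjoint ip T h b.
Proof.
by rewrite /adjoint linearB (ip_sym hip) ip_addl // ip_oppl // !(ip_sym hip h).
Qed.

Lemma adjointZ t d : adjoint ip T h (t *: d) = t * adjoint ip T h d.
Proof. by rewrite /adjoint linearZ (ip_sym hip) ip_scalel // (ip_sym hip). Qed.

End Adjoint.

Lemma fidelity_expansion (R : realType) (X H : normedModType R)
  (ip : H -> H -> R) (hip : is_inner_product ip) (T : {linear X -> H})
  (f : H) (lam : R) (x1 y : X) :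
  lam / 2 * `|T y - f| ^+ 2 =
  lam / 2 * `|T x1 - f| ^+ 2 - lam * adjoint ip T (f - T x1) (y - x1)
  + lam / 2 * `|T (y - x1)| ^+ 2.
Proof.
have -> : T y - f = T (y - x1) + (T x1 - f) by rewrite linearB addrA subrK.
rewrite (sqr_norm_add hip) /adjoint -[f - T x1]opprB ip_oppl //.
by rewrite (ip_sym hip (T (y - x1))); field.
Qed.

Definition convex_ext (R : realType) (X : lmodType R) (g : X -> \bar R) : Prop :=
  forall u v (a b t : R), 0 < t < 1 -> g u = a%:E -> g v = b%:E ->
    (g ((1 - t) *: u + t *: v)%R <= ((1 - t) * a + t * b)%:E)%E.

(* xi is a subgradient of g at x0 (xi is not required to be linear here). *)
Definition subgradient (R : realType) (X : lmodType R) (g : X -> \bar R)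
  (xi : X -> R) (x0 : X) : Prop :=
  forall y, (g x0 + (xi (y - x0))%:E <= g y)%E.

Lemma ge0_of_small_perturbations (R : realType) (a n : R) : 0 <= n ->
  (forall t, 0 < t < 1 -> 0 <= a + t * n) -> 0 <= a.
Proof.
move=> n_ge0 small; rewrite leNgt; apply/negP => a_lt0.
have D_gt0 : 0 < n + 1 - a by lra.
pose t := - a / (n + 1 - a).
have t_gt0 : 0 < t by rewrite divr_gt0 // oppr_gt0.
have t_lt1 : t < 1 by rewrite ltr_pdivrMr // mul1r; lra.
have tn_small : t * n < - a by rewrite /t mulrAC ltr_pdivrMr //; nra.
by have := small t (andb_true_intro (conj t_gt0 t_lt1)); lra.
Qed.

Section QuadraticPlusConvex.
Variables (R : realType) (X : lmodType R) (xi N Q : X -> R) (x1 : X).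
Hypothesis xiZ : forall t d, xi (t *: d) = t * xi d.
Hypothesis NZ : forall t d, N (t *: d) = t ^+ 2 * N d.
Hypothesis N_ge0 : forall d, 0 <= N d.
Hypothesis Q_expansion : forall y, Q y = Q x1 - xi (y - x1) + N (y - x1).

Lemma argmin_quadratic_convex_subgradient (g : X -> \bar R) :
  (forall y, (0 <= g y)%E) -> convex_ext g ->
  is_argmin (fun y => ((Q y)%:E + g y)%E) x1 -> subgradient g xi x1.
Proof.
move=> g_ge0 g_cvx x1_min y.
have g_fin z : g z != -oo%E by apply: contraTneq (g_ge0 z) => ->.
case Egx: (g x1) => [c| |]; last by move: (g_fin x1); rewrite Egx.
- case Egy: (g y) => [b| |]; [| by rewrite leey | by move: (g_fin y); rewrite Egy].
  rewrite -EFinD lee_fin -subr_ge0; set d := y - x1.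
  apply: (ge0_of_small_perturbations (N_ge0 d)) => t t01.
  have [t_gt0 _] := andP t01.
  have segment : x1 + t *: d = (1 - t) *: x1 + t *: y.
    by rewrite /d scalerBr scalerBl scale1r addrCA addrC.
  have g_seg := g_cvx _ _ _ _ _ t01 Egx Egy; rewrite -segment in g_seg.
  (* minimality at x1 + t d, bounded above by convexity of g along [x1, y] *)
  have := le_trans (x1_min (x1 + t *: d)) (leeD2l _ g_seg).
  rewrite Egx -!EFinD lee_fin (Q_expansion (x1 + _)) [x1 + _]addrC addrK xiZ NZ.
  move=> opt; have : 0 <= t * (b - (c + xi d) + t * N d) by nra.
  by rewrite pmulr_rge0.
- (* g x1 = +oo: minimality forces g = +oo everywhere *)
  rewrite addye //; have := x1_min y; rewrite Egx addey //.
  by case: (g y) => [r| |] //; rewrite -EFinD !leye_eq.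
Qed.

End QuadraticPlusConvex.

Section Seminorm.
Variables (R : realType) (X : normedModType R) (J : X -> \bar R).
Hypothesis hJ : is_seminorm J.

Lemma seminorm_ge0 x : (0 <= J x)%E.
Proof. by case: hJ. Qed.

Lemma seminorm0 : J 0 = 0%E.
Proof. by case: hJ => _ hom _; rewrite -(scale0r 0) hom normr0 mul0e. Qed.

Lemma seminorm_convex : convex_ext J.
Proof.
move=> u v a b t /andP[t_gt0 t_lt1] Ju Jv; case: hJ => _ hom sub.
apply: le_trans (sub _ _) _; rewrite !hom Ju Jv -!EFinM -EFinD lee_fin.
by rewrite (ger0_norm (ltW t_gt0)) ger0_norm //; lra.
Qed.

Lemma convex_ext_translate (g : X -> \bar R) (x0 : X) :
  convex_ext g -> convex_ext (fun y => g (y - x0)).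
Proof.
move=> g_cvx u v a b t t01 gu gv.
have -> : (1 - t) *: u + t *: v - x0 = (1 - t) *: (u - x0) + t *: (v - x0).
  by rewrite !scalerBr addrACA -opprD -scalerDl subrK scale1r.
exact: g_cvx.
Qed.

Variables (xi : X -> R) (x1 : X).
Hypothesis xiB : forall a b, xi (a - b) = xi a - xi b.
Hypothesis xi_sub : subgradient J xi x1.

Let xi0 : xi 0 = 0.
Proof. by have := xiB 0 0; rewrite !subrr. Qed.

Lemma seminorm_subgradient_eq : J x1 = (xi x1)%:E.
Proof.
case: hJ => _ _ sub.
(* testing at 0 gives J x1 <= xi x1, testing at 2 x1 gives the converse *)
have at0 := xi_sub 0; rewrite seminorm0 xiB xi0 sub0r in at0.
have := le_trans (xi_sub (x1 + x1)) (sub _ _); rewrite addrK.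
move: at0; case: (J x1) (seminorm_ge0 x1) => [c| |] //= _.
by rewrite -!EFinD !lee_fin => ? ?; congr EFin; lra.
Qed.

Lemma seminorm_subgradient_le y : ((xi y)%:E <= J y)%E.
Proof.
case: hJ => _ _ sub.
have := le_trans (xi_sub (x1 + y)) (sub _ _).
rewrite [x1 + y]addrC addrK seminorm_subgradient_eq.
case: (J y) => [r|_|] //=; last exact: leey.
by rewrite -!EFinD !lee_fin; lra.
Qed.

End Seminorm.

Section MhdmStep.
Variables (R : realType) (X : normedModType R) (J : X -> \bar R).
Hypothesis hJ : is_seminorm J.
Variables (xi N Q : X -> R) (x0 x1 : X).
Hypothesis xiB : forall a b, xi (a - b) = xi a - xi b.
Hypothesis xiZ : forall t d, xi (t *: d) = t * xi d.
Hypothesis NZ : forall t d, N (t *: d) = t ^+ 2 * N d.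
Hypothesis N_ge0 : forall d, 0 <= N d.
Hypothesis Q_expansion : forall y, Q y = Q x1 - xi (y - x1) + N (y - x1).
Hypothesis xi_sub : subgradient J xi x1.

Lemma mhdm_argmin_iff :
  is_argmin (fun y => ((Q y)%:E + J (y - x0)%R)%E) x1 <->
  J (x1 - x0) = (xi (x1 - x0))%:E.
Proof.
have xi_le := seminorm_subgradient_le hJ xiB xi_sub.
split=> [x1_min | Jeq].
- have g_sub : subgradient (fun y => J (y - x0)) xi x1.
    apply: argmin_quadratic_convex_subgradient x1_min => // [y|].
      exact: seminorm_ge0.
    exact/convex_ext_translate/seminorm_convex.
  apply/le_anti; rewrite xi_le andbT.
  have := g_sub x0; rewrite subrr seminorm0 // !xiB.
  case: (J (x1 - x0)) => [r| |] //=; last by move=> _; rewrite leNye.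
  by rewrite -EFinD !lee_fin; lra.
- move=> y; rewrite Jeq (Q_expansion y) -EFinD.
  apply: le_trans (leeD2l _ (xi_le (y - x0))); rewrite -EFinD lee_fin.
  have := N_ge0 (y - x1); rewrite !xiB; lra.
Qed.

Lemma bregman_eq0_iff :
  bregman J xi (x1 - x0) x1 = 0%E <-> J (x1 - x0) = (xi (x1 - x0))%:E.
Proof.
rewrite /bregman (seminorm_subgradient_eq hJ xiB xi_sub) !xiB.
case: (J (x1 - x0)) => [r| |] //=.
by rewrite -!EFinD; split=> [[]|[]] eq; congr EFin; lra.
Qed.

End MhdmStep.

Theorem mainTheorem10 (R : realType)
  (X : completeNormedModType R) (H : completeNormedModType R)
  (ip : H -> H -> R) (hip : is_inner_product ip)
  (T : {linear X -> H}) (hTc : continuous T) (f : H)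
  (J : X -> \bar R) (hJ : is_seminorm J)
  (hmin : forall (lam : R) (z : X), 0 < lam ->
            exists x, is_argmin (mhdm_fun T f J lam z) x)
  (hmin0 : forall lam : R, 0 < lam -> exists x, is_argmin (tikhonov T f J lam) x)
  (lam : nat -> R) (hpos : forall n, 0 < lam n)
  (hinc : forall n, lam n <= lam n.+1)
  (xs : nat -> X) (hxs : is_mhdm T f J lam xs)
  (k : nat) (xlk : X) (hxlk : is_argmin (tikhonov T f J (lam k)) xlk)
  (hk : xs k = xlk)
  (xlk1 : X) (hxlk1 : is_argmin (tikhonov T f J (lam k.+1)) xlk1) :
  let xi : X -> R := fun x => lam k.+1 * adjoint ip T (f - T xlk1) x in
  is_argmin (mhdm_fun T f J (lam k.+1) (xs k)) xlk1 <->
  bregman J xi (xlk1 - xlk) xlk1 = 0%E.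
Proof.
move=> xi; rewrite hk.
set L := lam k.+1; have L_ge0 : 0 <= L / 2 by rewrite divr_ge0 //; exact/ltW/hpos.
pose Q y := L / 2 * `|T y - f| ^+ 2.
pose N d := L / 2 * `|T d| ^+ 2.
have xiB a b : xi (a - b) = xi a - xi b by rewrite /xi adjointB //; ring.
have xiZ t d : xi (t *: d) = t * xi d by rewrite /xi adjointZ //; ring.
have NZ t d : N (t *: d) = t ^+ 2 * N d.
  by rewrite /N linearZ normrZ exprMn real_normK ?num_real //; ring.
have N_ge0 d : 0 <= N d by rewrite /N mulr_ge0 ?sqr_ge0.
have Q_expansion y : Q y = Q xlk1 - xi (y - xlk1) + N (y - xlk1).
  exact: (fidelity_expansion hip).
have xi_sub : subgradient J xi xlk1.
  apply: (argmin_quadratic_convex_subgradient xiZ NZ N_ge0 Q_expansion) hxlk1.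
    exact: seminorm_ge0.
  exact: seminorm_convex.
apply: iff_trans (mhdm_argmin_iff hJ xlk xiB xiZ NZ N_ge0 Q_expansion xi_sub) _.
exact: iff_sym (bregman_eq0_iff hJ xlk xiB xi_sub).
Qed.
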